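(* Let $A$ be a circular $m\times n$ matrix and $b\in\mathbb{Z}_+^m$. Then $$Q^*(A,b)=\operatorname{conv}\Big(\bigcup_{\beta\in\mathbb{Z}_{\ge0}}Q_\beta(A,b)\Big),$$ where $Q_\beta(A,b)=\{x\in\mathbb{R}^n:Ax\ge b,\ x\ge0,\ \mathbf{1}^Tx=\beta\}$.
   Context: Notation: $[n]=\{1,\dots,n\}$ with addition mod $n$; for $a,c\in[n]$ with $t\ge0$ minimal such that $a+t\equiv c\pmod n$, $[a,c)_n=\{a,\dots,a+t-1\}$ (mod $n$). An $m\times n$ $\{0,1\}$-matrix $A$ is circular if for each row $i$ there are $\ell_i\in[n]$ and an integer $2\le k_i\le n-1$ such that row $i$ is the incidence vector of $[\ell_i,\ell_i+k_i)_n$. $Q(A,b)=\{x\in\mathbb{R}^n:Ax\ge b,x\ge0\}$, $Q^*(A,b)=\operatorname{conv}(Q(A,b)\cap\mathbb{Z}^n)$. *)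

From HB Require Import structures.
From mathcomp Require Import all_boot all_order all_algebra.
From mathcomp Require Import reals.
Set Implicit Arguments. Unset Strict Implicit. Unset Printing Implicit Defensive.
Import Order.TTheory GRing.Theory Num.Theory.
Local Open Scope ring_scope.

(* Indices [n] = {1..n} are represented by 'I_n = {0..n-1} (shift by one).
   j lies in the circular interval [l, l+k)_n iff (j - l) mod n < k. *)
Definition in_circ_interval (n : nat) (l k : nat) (j : 'I_n) : bool :=
  ((j + n - l) %% n < k)%N.

Definition circular (R : realType) (m n : nat) (A : 'M[R]_(m, n)) : Prop :=
  forall i : 'I_m, exists (l : 'I_n) (k : nat),
    (2 <= k)%N /\ (k <= n.-1)%N /\
    forall j : 'I_n, A i j = (if @in_circ_interval n l k j then 1 else 0).

Definition Q (R : realType) (m n : nat) (A : 'M[R]_(m, n)) (b : 'I_m -> nat)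
  (x : 'I_n -> R) : Prop :=
  (forall i : 'I_m, (b i)%:R <= \sum_(j < n) A i j * x j) /\
  (forall j : 'I_n, 0 <= x j).

Definition is_integral (R : realType) (n : nat) (x : 'I_n -> R) : Prop :=
  exists z : 'I_n -> int, forall j, x j = (z j)%:~R.

Definition conv (R : realType) (n : nat) (S : ('I_n -> R) -> Prop)
  (x : 'I_n -> R) : Prop :=
  exists (k : nat) (lam : 'I_k -> R) (p : 'I_k -> 'I_n -> R),
    (forall t, 0 <= lam t) /\ \sum_(t < k) lam t = 1 /\
    (forall t, S (p t)) /\
    (forall j, x j = \sum_(t < k) lam t * p t j).

Definition Qstar (R : realType) (m n : nat) (A : 'M[R]_(m, n)) (b : 'I_m -> nat) :=
  conv (fun x => Q A b x /\ is_integral x).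

Definition Qbeta (R : realType) (m n : nat) (A : 'M[R]_(m, n)) (b : 'I_m -> nat)
  (beta : nat) (x : 'I_n -> R) : Prop :=
  Q A b x /\ \sum_(j < n) x j = beta%:R.

From HB Require Import structures.
From mathcomp Require Import all_boot all_order all_algebra.
From mathcomp Require Import reals.
From mathcomp Require Import ring lra zify.
Import Order.TTheory GRing.Theory Num.Theory.
Local Open Scope ring_scope.
Set Implicit Arguments. Unset Strict Implicit. Unset Printing Implicit Defensive.

(* For x in Q_beta, the prefix sums y_t = x_0 + ... + x_(t-1), t = 0..n, turn
   every constraint into an integral bound on a difference y_a - y_b: a row
   whose interval does not wrap around reads y_(l+k) - y_l >= b_i, a wrapping
   one reads y_(l+k-n) - y_l >= b_i - beta because y_n - y_0 = beta, and
   x >= 0 reads y_(t+1) - y_t >= 0.  Every real vector y is a convex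
   combination of integral vectors satisfying all the integral difference
   bounds that y satisfies (write y as a mix of its floor and of the vector
   obtained by blowing up the fractional parts until the largest one becomes
   1, and recurse), and consecutive differences of such vectors lie in
   Q_beta and are integral. *)

Section Convexity.
Variables (R : realType) (n : nat).
Implicit Types (S C : ('I_n -> R) -> Prop) (p q x : 'I_n -> R).

Definition convex_set C :=
  forall a p q, 0 <= a <= 1 -> C p -> C q -> C (fun j => a * p j + (1 - a) * q j).

Lemma conv_mem S p : S p -> conv S p.
Proof.
move=> Sp; exists 1%N, (fun _ => 1), (fun _ => p).
split=> [_|]; first exact: ler01.
by rewrite big_ord1; split=> //; split=> [_ | j]; rewrite ?big_ord1 ?mul1r.
Qed.

Lemma conv_convex S : convex_set (conv S).
Proof.
move=> a _ _ /andP[a0 a1] [k1 [l1 [p1 [l1_ge0 [l1_sum [Sp1 /boolp.funext ->]]]]]]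
  [k2 [l2 [p2 [l2_ge0 [l2_sum [Sp2 /boolp.funext ->]]]]]].
exists (k1 + k2)%N,
  (fun t => match split t with inl t => a * l1 t | inr t => (1 - a) * l2 t end),
  (fun t => match split t with inl t => p1 t | inr t => p2 t end).
split; first by move=> t; case: split => t'; apply: mulr_ge0; rewrite ?subr_ge0.
split.
  rewrite big_split_ord /=.
  under eq_bigr do rewrite (unsplitK (inl _)).
  under [X in _ + X = _]eq_bigr do rewrite (unsplitK (inr _)).
  by rewrite -!mulr_sumr l1_sum l2_sum !mulr1 addrC subrK.
split; first by move=> t; case: split.
move=> j; rewrite big_split_ord /= !mulr_sumr.
by congr (_ + _); apply: eq_bigr => t _;
  rewrite ?(unsplitK (inl _)) ?(unsplitK (inr _)) mulrA.
Qed.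

Lemma conv_min S C : convex_set C -> (forall p, S p -> C p) ->
  forall x, conv S x -> C x.
Proof.
move=> convC SC x [k]; elim: k x => [|k IH] x [lam [p [lam_ge0 [+ [Sp]]]]].
  by rewrite big_ord0 => /esym/eqP; rewrite oner_eq0.
rewrite big_ord_recr /= => lam_sum /boolp.funext ->.
set a := lam ord_max in lam_sum *; set w := widen_ord (leqnSn k) in lam_sum *.
have a_ge0 : 0 <= a := lam_ge0 ord_max.
have sum_ge0 : 0 <= \sum_(t < k) lam (w t) by apply: sumr_ge0.
have [a1 | a_neq1] := eqVneq a 1.
  have lam0 t : lam (w t) = 0.
    apply/eqP; rewrite eq_le lam_ge0 andbT.
    have <- : \sum_(t < k) lam (w t) = 0 by lra.
    by rewrite (bigD1 t) //= lerDl sumr_ge0.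
  apply: SC; congr S: (Sp ord_max); apply: boolp.funext => j.
  by rewrite big_ord_recr big1 /= => [|t _]; rewrite ?lam0 ?mul0r // add0r -/a a1 mul1r.
have a_lt1 : 0 < 1 - a by rewrite subr_gt0 lt_neqAle a_neq1; lra.
pose x' j := \sum_(t < k) lam (w t) / (1 - a) * p (w t) j.
have Cx' : C x'.
  apply: IH; exists (fun t => lam (w t) / (1 - a)), (fun t => p (w t)).
  split; first by move=> t; rewrite divr_ge0 // ltW.
  split; last by split.
  by rewrite -mulr_suml (_ : \sum_t lam (w t) = 1 - a) ?divff ?gt_eqF //; lra.
have -> : (fun j => \sum_(t < k.+1) lam t * p t j) =
          (fun j => a * p ord_max j + (1 - a) * x' j).
  apply: boolp.funext => j; rewrite big_ord_recr addrC mulr_sumr /=.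
  congr (_ + _); apply: eq_bigr => t _.
  by rewrite mulrA mulrCA divff ?mulr1 // gt_eqF.
by apply: convC; [lra | apply: SC | ].
Qed.

Lemma conv_sub S1 S2 : (forall p, S1 p -> S2 p) -> forall x, conv S1 x -> conv S2 x.
Proof. by move=> S12; apply: conv_min (@conv_convex S2) _ => p /S12/conv_mem. Qed.

End Convexity.

Lemma is_integralP (R : realType) n (x : 'I_n -> R) :
  is_integral x <-> forall j, x j \is a Num.int.
Proof.
split=> [[z /boolp.funext -> j] | xint]; first exact: intr_int.
by exists (fun j => Num.floor (x j)) => j; rewrite floorK.
Qed.

Section FractionalParts.
Variable R : archiFieldType.
Implicit Types (r u v g : R).

Definition frac r := r - (Num.floor r)%:~R.

Lemma frac_ge0 r : 0 <= frac r.
Proof. by rewrite subr_ge0 floor_le. Qed.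

Lemma frac_lt1 r : frac r < 1.
Proof. by have := floorD1_gt r; rewrite /frac intrD; lra. Qed.

Lemma frac_eq0 r : (frac r == 0) = (r \is a Num.int).
Proof. by rewrite subr_eq0 eq_sym intrEfloor. Qed.

Lemma floor_diff_ge u v (c : int) : c%:~R <= u - v ->
  (c + Num.floor v <= Num.floor u)%R.
Proof. by move=> h; rewrite floor_ge_int intrD; have := floor_le v; lra. Qed.

Variable I : Type.
Implicit Types (y w z : I -> R).

Definition keeps_int_diffs y z :=
  forall a b (c : int), c%:~R <= y a - y b -> c%:~R <= z a - z b.

Lemma keeps_int_diffs_trans y w z :
  keeps_int_diffs y w -> keeps_int_diffs w z -> keeps_int_diffs y z.
Proof. by move=> yw wz a b c /yw/wz. Qed.

Lemma keeps_int_diffs_floor y : keeps_int_diffs y (fun i => (Num.floor (y i))%:~R).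
Proof.
move=> a b c /floor_diff_ge; rewrite -(ler_int R) intrD; lra.
Qed.

Definition scale_frac y g i := (Num.floor (y i))%:~R + frac (y i) / g.

(* If the floors differ by more than c, the rescaled fractional parts, which
   lie in [0, 1], cannot break the bound; if they differ by exactly c, the
   bound says frac (y b) <= frac (y a), and rescaling preserves that. *)
Lemma keeps_int_diffs_scale_frac y g : 0 < g -> (forall i, frac (y i) <= g) ->
  keeps_int_diffs y (scale_frac y g).
Proof.
move=> g_gt0 le_g a b c hc; rewrite /scale_frac.
set Fa := Num.floor (y a); set Fb := Num.floor (y b).
set fa := frac (y a); set fb := frac (y b).
have fa_ge0 : 0 <= fa / g by rewrite divr_ge0 ?frac_ge0 ?ltW.
have fb_le1 : fb / g <= 1 by rewrite ler_pdivrMr // mul1r; apply: le_g.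
have hy : y a - y b = Fa%:~R - Fb%:~R + (fa - fb) by rewrite /fa /fb /frac; ring.
have [F_eq | F_gt] : (Fa - Fb = c \/ c + 1 <= Fa - Fb)%R.
  by have := floor_diff_ge hc; lia.
  have {}F_eq : Fa%:~R - Fb%:~R = c%:~R :> R by rewrite -intrB F_eq.
  have : fb / g <= fa / g by rewrite ler_pM2r ?invr_gt0 //; lra.
  lra.
have : (c + 1)%:~R <= Fa%:~R - Fb%:~R :> R by rewrite -intrB ler_int.
rewrite intrD; lra.
Qed.

End FractionalParts.

Lemma card_nonint_scale_frac (R : archiFieldType) (I : finType) (y : I -> R) i0 :
  y i0 \isn't a Num.int -> (forall i, frac (y i) <= frac (y i0)) ->
  (#|[pred i | scale_frac y (frac (y i0)) i \isn't a Num.int]| <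
   #|[pred i | y i \isn't a Num.int]|)%N.
Proof.
move=> y0 le_g; set g := frac (y i0).
have g_gt0 : 0 < g by rewrite lt_def frac_eq0 y0 frac_ge0.
apply/proper_card/properP; split.
  apply/subsetP => i; rewrite !inE /scale_frac; apply: contra => yi.
  have /eqP-> : frac (y i) == 0 by rewrite frac_eq0.
  by rewrite mul0r addr0 intr_int.
exists i0; rewrite !inE // negbK /scale_frac divff ?gt_eqF //.
by rewrite rpredD ?intr_int ?int_num1.
Qed.

Section Rounding.
Variables (R : realType) (N : nat).

Definition int_rounding (y z : 'I_N -> R) := is_integral z /\ keeps_int_diffs y z.

Lemma conv_int_rounding y : conv (int_rounding y) y.
Proof.
have [k] := ubnP #|[pred i | y i \isn't a Num.int]|; elim: k y => // k IH y.
case: (pickP [pred i | y i \isn't a Num.int]) => [i1 /= y1 | yint] card_y; last first.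
  apply: conv_mem; split=> [|a b c //]; apply/is_integralP => i.
  by have := yint i; rewrite /= => /negbFE.
case: (arg_maxP (fun i => frac (y i)) (isT : xpredT i1)) => i0 _ /(_ _ isT) le_g.
set g := frac (y i0).
have g_gt0 : 0 < g.
  by apply: lt_le_trans (le_g i1); rewrite lt_def frac_eq0 y1 frac_ge0.
have y_mix : (fun j => g * scale_frac y g j + (1 - g) * (Num.floor (y j))%:~R) = y.
  by apply: boolp.funext => j; rewrite /scale_frac /frac; field; rewrite gt_eqF.
rewrite -[X in conv _ X]y_mix.
apply: conv_convex.
- by rewrite /g frac_ge0 ltW ?frac_lt1.
- apply: conv_sub (IH _ _) => [z [z_int keeps_z] | ].
    split=> //; apply: keeps_int_diffs_trans keeps_z.
    exact: keeps_int_diffs_scale_frac.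
  rewrite -ltnS; apply: leq_trans card_y; apply: card_nonint_scale_frac => //.
  by rewrite -frac_eq0 gt_eqF.
- apply: conv_mem; split; last exact: keeps_int_diffs_floor.
  by apply/is_integralP => j; apply: intr_int.
Qed.

End Rounding.

Lemma telescope_sum_indicator (R : pzRingType) (f : nat -> R) (P : pred nat)
    (lo hi a c : nat) :
  (lo <= a)%N -> (a <= c)%N -> (c <= hi)%N ->
  (forall t, (lo <= t < hi)%N -> P t = (a <= t < c)%N) ->
  \sum_(lo <= t < hi) (if P t then 1 else 0) * (f t.+1 - f t) = f c - f a.
Proof.
move=> lo_a a_c c_hi P_itv.
have sum_out u v : (forall t, (u <= t < v)%N -> P t = false) ->
    \sum_(u <= t < v) (if P t then 1 else 0) * (f t.+1 - f t) = 0.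
  by move=> Pu; rewrite big_nat big1 // => t /Pu ->; rewrite mul0r.
rewrite (big_cat_nat (leq_trans lo_a a_c) c_hi) (big_cat_nat lo_a a_c) /=.
rewrite (sum_out lo a) => [|t ht]; last by rewrite P_itv; lia.
rewrite (sum_out c hi) => [|t ht]; last by rewrite P_itv; lia.
rewrite add0r addr0 -(telescope_sumr f a_c) !big_nat.
by apply: eq_bigr => t ht; rewrite P_itv ?ht ?mul1r //; lia.
Qed.

Section PrefixSums.
Variables (R : realType) (n : nat).
Implicit Types (x : 'I_n -> R) (y z : 'I_n.+1 -> R).

Definition diffs z : 'I_n -> R := fun j => z (inord j.+1) - z (inord j).

Definition psums x : 'I_n.+1 -> R := fun t => \sum_(j < n | (j < t)%N) x j.

Lemma diffs_psums x : diffs (psums x) = x.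
Proof.
apply: boolp.funext => j; rewrite /diffs /psums !inordK ?ltnS ?(ltnW (ltn_ord j)) //.
rewrite (bigD1 j) //= (eq_bigl (fun i : 'I_n => (i < j)%N)) ?addrK // => i.
by rewrite ltnS -val_eqE /=; case: ltngtP.
Qed.

Lemma sum_diffs z : \sum_j diffs z j = z (inord n) - z (inord 0).
Proof.
by rewrite -(telescope_sumr (fun t => z (inord t))) // big_mkord.
Qed.

Lemma is_integral_diffs z : is_integral z -> is_integral (diffs z).
Proof.
by move=> /is_integralP z_int; apply/is_integralP => j; rewrite rpredB.
Qed.

Lemma conv_diffs (S : ('I_n.+1 -> R) -> Prop) (T : ('I_n -> R) -> Prop) y :
  (forall z, S z -> T (diffs z)) -> conv S y -> conv T (diffs y).
Proof.
move=> ST [k [lam [p [lam_ge0 [lam_sum [Sp y_eq]]]]]].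
exists k, lam, (fun t => diffs (p t)); do 2!split=> //; split=> [t | j].
  exact: ST.
by rewrite /diffs !y_eq -sumrB; apply: eq_bigr => t _; rewrite mulrBr.
Qed.

Lemma in_circ_intervalE (l : 'I_n) k (j : 'I_n) : (k <= n)%N ->
  in_circ_interval l k j = (l <= j < l + k)%N || (j + n < l + k)%N.
Proof.
move=> kn; have := ltn_ord l; have := ltn_ord j.
rewrite /in_circ_interval; case: (ltnP j l) => jl jn ln.
  by rewrite modn_small; lia.
by rewrite -addnBAC // modnDr modn_small; lia.
Qed.

Lemma sum_circ_interval_diffs z (l : 'I_n) k : (k <= n)%N ->
  \sum_(j < n) (if in_circ_interval l k j then 1 else 0) * diffs z j =
  if (l + k <= n)%N then z (inord (l + k)) - z (inord l)
  else z (inord (l + k - n)) - z (inord l) + (z (inord n) - z (inord 0)).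
Proof.
move=> kn; pose P t := (l <= t < l + k)%N || (t + n < l + k)%N.
rewrite (eq_bigr (fun j : 'I_n => (if P j then 1 else 0) * diffs z j)) => [|j _];
  last by rewrite in_circ_intervalE.
rewrite -(big_mkord xpredT (fun t => (if P t then 1 else 0) *
  (z (inord t.+1) - z (inord t)))).
case: leqP => lkn.
  by apply: telescope_sum_indicator => [||| t tn]; rewrite /P; lia.
have ln := ltn_ord l.
rewrite (big_cat_nat (n := l)) ?(ltnW ln) //=.
rewrite (telescope_sum_indicator _ (a := 0) (c := l + k - n)) => [||||t tl];
  rewrite /P; try lia.
rewrite (telescope_sum_indicator _ (a := l) (c := n)) => [||||t tl];
  rewrite /P; try lia.
lra.
Qed.

End PrefixSums.

Section CircularSystem.
Variables (R : realType) (m n : nat) (A : 'M[R]_(m, n)) (b : 'I_m -> nat).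

Lemma integral_Q_Qbeta p : Q A b p -> is_integral p -> exists beta, Qbeta A b beta p.
Proof.
move=> Qp /is_integralP p_int.
have /natrP[beta sum_p] : \sum_j p j \is a Num.nat.
  by rewrite rpred_sum // => j _; rewrite natrEint p_int Qp.2.
by exists beta.
Qed.

Hypothesis A_circ : circular A.

Lemma keeps_int_diffs_Qbeta beta (y z : 'I_n.+1 -> R) :
  Qbeta A b beta (diffs y) -> keeps_int_diffs y z -> Qbeta A b beta (diffs z).
Proof.
rewrite /Qbeta !sum_diffs => -[[Ay_ge y_ge0] y_sum] yz.
have z_sum : z (inord n) - z (inord 0) = beta%:R.
  have := yz (inord n) (inord 0) beta; have := yz (inord 0) (inord n) (- beta%:Z).
  rewrite intrN; lra.
split=> //; split=> [i | j]; last exact: (yz _ _ 0 (y_ge0 j)).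
have [l [k [_ [k_lt A_i]]]] := A_circ i.
have row w : \sum_j A i j * diffs w j =
  if (l + k <= n)%N then w (inord (l + k)) - w (inord l)
  else w (inord (l + k - n)) - w (inord l) + (w (inord n) - w (inord 0)).
  by under eq_bigr do rewrite A_i; apply: sum_circ_interval_diffs; lia.
move: (Ay_ge i); rewrite !row; case: leqP => _; first exact: (yz _ _ (b i)).
have := yz (inord (l + k - n)) (inord l) ((b i)%:Z - beta%:Z).
rewrite intrB; lra.
Qed.

Lemma Qbeta_sub_Qstar beta x : Qbeta A b beta x -> Qstar A b x.
Proof.
rewrite -{1 2}(diffs_psums x) => Qy.
apply: conv_diffs (conv_int_rounding (psums x)) => z [z_int yz].
by case: (keeps_int_diffs_Qbeta Qy yz); split; last exact: is_integral_diffs.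
Qed.

End CircularSystem.

Theorem corollary3p2 (R : realType) (m n : nat) (A : 'M[R]_(m, n))
  (b : 'I_m -> nat) :
  circular A ->
  forall x : 'I_n -> R,
    Qstar A b x <-> conv (fun y => exists beta : nat, Qbeta A b beta y) x.
Proof.
move=> A_circ x; split.
  by apply: conv_sub => p [Qp p_int]; apply: integral_Q_Qbeta.
rewrite /Qstar => cx; apply: (conv_min _ _ cx); first exact: conv_convex.
by move=> p [beta]; apply: Qbeta_sub_Qstar.
Qed.
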